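(* In the standing setting described in the context, let $(\phi,\beta),(\psi,\alpha)\in\mathcal{A}\times\mathcal{B}$. Then $(G,\circ_{\phi,\beta})$ and $(G,\circ_{\psi,\alpha})$ are groups (with identity $1$; the inverse of $g$ in $(G,\circ_{\phi,\beta})$ is $\phi^{\uparrow}(g)^{-1}\, g^{-1}\,\phi^{\uparrow}(g)\,\beta(g,g)$ for any lifting $\phi^\uparrow$ of $\phi$), and $(G,\circ_{\phi,\beta},\circ_{\psi,\alpha})$ is a bi-skew brace. In other words, the family of operations $(\circ_{\phi,\beta} : (\phi,\beta)\in\mathcal{A}\times\mathcal{B})$ is a brace block on $G$.
   Context: Standing setting: $(G,\cdot)$ is a group, $K$ is a subgroup of $G$ contained in the centre $Z(G)$, and $A$ is a subgroup with $K\le A\le G$ and $A/K$ abelian. Let $\mathcal{A}=\{\psi\in\operatorname{End}(G/K):\psi(G/K)\le A/K\}$; it is a ring with $(\psi+\phi)(x)=\psi(x)\phi(x)$, $(-\psi)(x)=\psi(x)^{-1}$ and $(\psi\phi)(x)=\psi(\phi(x))$. A lifting of $\psi\in\mathcal{A}$ is any set map $\psi^{\uparrow}:G\to A$ with $\psi^{\uparrow}(g)K=\psi(gK)$ for all $g\in G$ (liftings need not be unique nor homomorphisms). Let $\mathcal{B}$ be the set of maps $\alpha:G\times G\to K$ that are bilinear, i.e. $\alpha(gh,k)=\alpha(g,k)\alpha(h,k)$ and $\alpha(g,hk)=\alpha(g,h)\alpha(g,k)$ for all $g,h,k\in G$, and satisfy $\alpha(k,g)=\alpha(g,k)=1$ for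 all $k\in K$, $g\in G$. For $(\psi,\alpha)\in\mathcal{A}\times\mathcal{B}$ define $g\circ_{\psi,\alpha}h=g\cdot\psi^{\uparrow}(g)\cdot h\cdot\psi^{\uparrow}(g)^{-1}\cdot\alpha(g,h)$, where $\psi^\uparrow$ is a lifting of $\psi$ (this does not depend on the choice of lifting). A skew brace is a triple $(G,\cdot,\circ)$ where $(G,\cdot)$ and $(G,\circ)$ are groups and $g\circ(h\cdot k)=(g\circ h)\cdot g^{-1}\cdot(g\circ k)$ for all $g,h,k$ ($g^{-1}$ the inverse for $\cdot$). A bi-skew brace is a triple $(G,\cdot,\circ)$ such that both $(G,\cdot,\circ)$ and $(G,\circ,\cdot)$ are skew braces. A brace block on a set $G$ is a family $\mathcal{F}$ of group operations on $G$ such that $(G,\circ,\diamond)$ is a bi-skew brace for all $\circ,\diamond\in\mathcal{F}$. *)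

Set Implicit Arguments.

Section Defs.
Variable T : Type.

Definition is_group_with (mul : T -> T -> T) (one : T) (inv : T -> T) : Prop :=
  (forall x y z, mul x (mul y z) = mul (mul x y) z) /\
  (forall x, mul one x = x /\ mul x one = x) /\
  (forall x, mul x (inv x) = one /\ mul (inv x) x = one).

Definition is_unit (mul : T -> T -> T) (e : T) : Prop :=
  forall x, mul e x = x /\ mul x e = x.

Definition is_group (mul : T -> T -> T) : Prop :=
  (forall x y z, mul x (mul y z) = mul (mul x y) z) /\
  exists e, is_unit mul e /\ forall x, exists y, mul x y = e /\ mul y x = e.

Definition skew_brace (mul1 mul2 : T -> T -> T) : Prop :=
  is_group mul1 /\ is_group mul2 /\
  forall e g x h k, is_unit mul1 e -> mul1 g x = e -> mul1 x g = e ->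
    mul2 g (mul1 h k) = mul1 (mul1 (mul2 g h) x) (mul2 g k).

Definition bi_skew_brace (mul1 mul2 : T -> T -> T) : Prop :=
  skew_brace mul1 mul2 /\ skew_brace mul2 mul1.

Definition brace_block (I : Type) (F : I -> T -> T -> T) : Prop :=
  forall i j, bi_skew_brace (F i) (F j).

Variables (mul : T -> T -> T) (one : T) (inv : T -> T).

Definition is_subgroup (H : T -> Prop) : Prop :=
  H one /\ (forall x y, H x -> H y -> H (mul x y)) /\ (forall x, H x -> H (inv x)).

Definition central (K : T -> Prop) : Prop :=
  forall k g, K k -> mul k g = mul g k.

(* A/K abelian: commutators of elements of A lie in K *)
Definition abelian_mod (K A : T -> Prop) : Prop :=
  forall a b, A a -> A b -> K (mul (mul (inv a) (inv b)) (mul a b)).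

(* f : T -> T is a lifting of some psi in End(G/K) with psi(G/K) <= A/K:
   f takes values in A, f induces a well-defined map on cosets gK,
   and that induced map is a homomorphism of G/K.  Conversely every
   lifting of every psi in the ring \mathcal{A} satisfies this. *)
Definition lifting_A (K A : T -> Prop) (f : T -> T) : Prop :=
  (forall g, A (f g)) /\
  (forall g h, K (mul (inv g) h) -> K (mul (inv (f g)) (f h))) /\
  (forall g h, K (mul (inv (f (mul g h))) (mul (f g) (f h)))).

Definition bilin_B (K : T -> Prop) (b : T -> T -> T) : Prop :=
  (forall g h, K (b g h)) /\
  (forall g h k, b (mul g h) k = mul (b g k) (b h k)) /\
  (forall g h k, b g (mul h k) = mul (b g h) (b g k)) /\
  (forall k g, K k -> b k g = one /\ b g k = one).

Definition circ (f : T -> T) (b : T -> T -> T) (g h : T) : T :=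
  mul (mul (mul (mul g (f g)) h) (inv (f g))) (b g h).

End Defs.

(* Write lam_g(h) = f(g) h f(g)^-1 b(g,h), so that g o_{f,b} h = g * lam_g(h).
   Because K is central and b is bilinear and trivial on K, each lam_g is an
   endomorphism of G and g |-> lam_g is a left action of G, depending on g only
   modulo K.  Because A/K is abelian, conjugating g does not change lam_g, so
   [lam_(lam'_a h) = lam_h] and [lam_a o lam'_c = lam'_c o lam_a] for the maps
   lam, lam' attached to any two pairs (f,b), (f',b').  These two identities
   alone give the group axioms for g * lam_g(h), with inverse lam_(g^-1)(g^-1),
   and the skew brace law for any two such operations, in either order. *)

From Stdlib Require Import ssreflect.
Set Implicit Arguments.
Unset Strict Implicit.

Declare Scope grp_scope.

Section Group.
Variables (T : Type) (mul : T -> T -> T) (one : T) (inv : T -> T).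
Hypothesis HG : is_group_with mul one inv.

Local Notation "x * y" := (mul x y) : grp_scope.
Local Notation "x ^-1" := (inv x) (at level 3, format "x ^-1") : grp_scope.
Local Open Scope grp_scope.

Lemma mulgA x y z : x * (y * z) = x * y * z. Proof. by case: HG. Qed.
Lemma mul1g x : one * x = x. Proof. by case: HG => _ [/(_ x) []]. Qed.
Lemma mulg1 x : x * one = x. Proof. by case: HG => _ [/(_ x) []]. Qed.
Lemma mulgV x : x * x^-1 = one. Proof. by case: HG => _ [_ /(_ x) []]. Qed.
Lemma mulVg x : x^-1 * x = one. Proof. by case: HG => _ [_ /(_ x) []]. Qed.

Lemma mulKg x y : x^-1 * (x * y) = y. Proof. by rewrite mulgA mulVg mul1g. Qed.
Lemma mulKVg x y : x * (x^-1 * y) = y. Proof. by rewrite mulgA mulgV mul1g. Qed.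
Lemma mulgK x y : x * y * y^-1 = x. Proof. by rewrite -mulgA mulgV mulg1. Qed.
Lemma mulgKV x y : x * y^-1 * y = x. Proof. by rewrite -mulgA mulVg mulg1. Qed.

Lemma eq_invg_mul x y : x * y = one -> y = x^-1.
Proof. by move=> xy1; rewrite -(mulKg x y) xy1 mulg1. Qed.

Lemma invgK x : x^-1^-1 = x.
Proof. by symmetry; apply: eq_invg_mul; rewrite mulVg. Qed.

Lemma invMg x y : (x * y)^-1 = y^-1 * x^-1.
Proof. by symmetry; apply: eq_invg_mul; rewrite mulgA mulgK mulgV. Qed.

Definition conjg a x := a * x * a^-1.

Lemma conjMg a x y : conjg a (x * y) = conjg a x * conjg a y.
Proof. by rewrite /conjg !mulgA mulgKV. Qed.

Lemma conjgM a b x : conjg (a * b) x = conjg a (conjg b x).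
Proof. by rewrite /conjg invMg !mulgA. Qed.

Definition is_endo_action (act : T -> T -> T) : Prop :=
  (forall g x y, act g (x * y) = act g x * act g y) /\
  (forall g h x, act (g * h) x = act g (act h x)) /\
  (forall x, act one x = x).

Definition compatible (act act' : T -> T -> T) : Prop :=
  (forall a h x, act (act' a h) x = act h x) /\
  (forall a c x, act a (act' c x) = act' c (act a x)).

Definition twist_inv (act : T -> T -> T) g := act g^-1 g^-1.

Section Twist.
Variables (act : T -> T -> T) (op : T -> T -> T).
Hypothesis act_endo : is_endo_action act.
Hypothesis act_self : compatible act act.
Hypothesis opE : forall g h, op g h = g * act g h.

Lemma act_mul g x y : act g (x * y) = act g x * act g y. Proof. by case: act_endo. Qed.
Lemma act_comp g h x : act (g * h) x = act g (act h x). Proof. by case: act_endo => _ []. Qed.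
Lemma act1 x : act one x = x. Proof. by case: act_endo => _ []. Qed.
Lemma act_index a h x : act (act a h) x = act h x. Proof. by case: act_self. Qed.
Lemma act_commute a c x : act a (act c x) = act c (act a x). Proof. by case: act_self. Qed.

Lemma act_g1 g : act g one = one.
Proof.
have E := act_mul g one one; rewrite mulg1 in E.
by rewrite -{1}(mulKg (act g one) (act g one)) -E mulVg.
Qed.

Lemma act_invgK g x : act g (act g^-1 x) = x.
Proof. by rewrite -act_comp mulgV act1. Qed.

Lemma twist_assoc g h k : op g (op h k) = op (op g h) k.
Proof. by rewrite !opE act_mul act_comp act_index mulgA. Qed.

Lemma twist1g h : op one h = h. Proof. by rewrite opE act1 mul1g. Qed.
Lemma twistg1 g : op g one = g. Proof. by rewrite opE act_g1 mulg1. Qed.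

Lemma twist_invr g : op g (twist_inv act g) = one.
Proof. by rewrite opE /twist_inv act_invgK mulgV. Qed.

Lemma twist_invl g : op (twist_inv act g) g = one.
Proof. by rewrite opE /twist_inv act_index -act_mul mulVg act_g1. Qed.

Lemma twist_unit : is_unit op one.
Proof. by move=> x; rewrite twist1g twistg1. Qed.

Lemma twist_group : is_group op.
Proof.
split; first exact: twist_assoc.
exists one; split; first exact: twist_unit.
by move=> g; exists (twist_inv act g); rewrite twist_invr twist_invl.
Qed.

Lemma twist_unit_eq e : is_unit op e -> e = one.
Proof. by move=> /(_ one) [_]; rewrite twist1g. Qed.

Lemma twist_inv_eq g x : op g x = one -> x = twist_inv act g.
Proof.
move=> gx1.
by rewrite -(twist1g x) -(twist_invl g) -twist_assoc gx1 twistg1.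
Qed.
End Twist.

Section TwistBrace.
Variables (act act' op op' : T -> T -> T).
Hypotheses (act_endo : is_endo_action act) (act'_endo : is_endo_action act').
Hypotheses (act_self : compatible act act) (act'_self : compatible act' act').
Hypothesis act_act' : compatible act act'.
Hypothesis opE : forall g h, op g h = g * act g h.
Hypothesis op'E : forall g h, op' g h = g * act' g h.

Lemma twist_brace_law g h k :
  op' g (op h k) = op (op (op' g h) (twist_inv act g)) (op' g k).
Proof.
have [act_act'_index act_act'_comm] := act_act'.
have act_gh y : act (op' g h) y = act g (act h y).
  by rewrite op'E (act_comp act_endo) act_act'_index.
have act_conj y : act g (act h (act g^-1 y)) = act h y.
  by rewrite (act_commute act_self h) (act_invgK act_endo).
rewrite !opE (act_comp act_endo) /twist_inv !(act_index act_self).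
rewrite -mulgA -!(act_mul act_endo) [op' g k]op'E mulKg act_gh act_conj.
by rewrite act_act'_comm !op'E (act_mul act'_endo) mulgA.
Qed.

Lemma twist_skew_brace : skew_brace op op'.
Proof.
split; first exact: (twist_group act_endo act_self opE).
split; first exact: (twist_group act'_endo act'_self op'E).
move=> e g x h k /(twist_unit_eq act_endo opE) -> gx1 _.
by rewrite (twist_inv_eq act_endo act_self opE gx1) twist_brace_law.
Qed.
End TwistBrace.

Section Central.
Variables (K A : T -> Prop).
Hypotheses (HK : is_subgroup mul one inv K) (HKc : central mul K).
Hypothesis HAab : abelian_mod mul inv K A.

Lemma group1 : K one. Proof. by case: HK. Qed.
Lemma groupM x y : K x -> K y -> K (x * y). Proof. by case: HK => _ [+ _]; apply. Qed.
Lemma groupV x : K x -> K x^-1. Proof. by case: HK => _ [_]; apply. Qed.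

Lemma commute_K k x : K k -> k * x = x * k. Proof. exact: HKc. Qed.

Lemma mulg_swapK x k y : K k -> x * k * y = x * y * k.
Proof. by move=> Kk; rewrite -!mulgA (commute_K _ Kk). Qed.

Lemma conjg_K a k : K k -> conjg a k = k.
Proof. by move=> Kk; rewrite /conjg -(commute_K _ Kk) mulgK. Qed.

Lemma conjgKl k x : K k -> conjg k x = x.
Proof. by move=> Kk; rewrite /conjg (commute_K _ Kk) mulgK. Qed.

Definition congK x y := K (x^-1 * y).

Lemma congKP x y : congK x y -> exists2 k, K k & y = x * k.
Proof. by move=> Kxy; exists (x^-1 * y); rewrite ?mulKVg. Qed.

Lemma congK_mulK x k : K k -> congK x (x * k).
Proof. by rewrite /congK mulKg. Qed.

Lemma congK_refl x : congK x x.
Proof. by rewrite -{2}(mulg1 x); apply/congK_mulK/group1. Qed.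

Lemma congK_sym x y : congK x y -> congK y x.
Proof.
by case/congKP=> k Kk ->; rewrite -{2}(mulgK x k); apply/congK_mulK/groupV.
Qed.

Lemma congK_trans x y z : congK x y -> congK y z -> congK x z.
Proof.
case/congKP=> k Kk -> /congKP [l Kl ->].
by rewrite -mulgA; apply/congK_mulK/groupM.
Qed.

Lemma congK_mul x x' y y' : congK x x' -> congK y y' -> congK (x * y) (x' * y').
Proof.
case/congKP=> k Kk -> /congKP [l Kl ->].
by rewrite mulgA (mulg_swapK _ _ Kk) -mulgA; apply/congK_mulK/groupM.
Qed.

Lemma conjg_congK a a' x : congK a a' -> conjg a x = conjg a' x.
Proof. by case/congKP=> k Kk ->; rewrite conjgM (conjgKl _ Kk). Qed.

Lemma congK_commute a b : A a -> A b -> congK (a * b) (b * a).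
Proof. by move=> Aa Ab; apply: congK_sym; rewrite /congK invMg; apply: HAab. Qed.

Section Lifting.
Variable f : T -> T.
Hypothesis Hf : lifting_A mul inv K A f.

Lemma lift_in_A g : A (f g). Proof. by case: Hf. Qed.
Lemma lift_congK g h : congK g h -> congK (f g) (f h). Proof. by case: Hf => _ [+ _]; apply. Qed.
Lemma lift_mul g h : congK (f (g * h)) (f g * f h). Proof. by case: Hf => _ [_]; apply. Qed.

Lemma lift1 : K (f one).
Proof. by have := lift_mul one one; rewrite mul1g /congK mulKg. Qed.

Lemma lift_inv g : congK (f g^-1) (f g)^-1.
Proof.
have := lift_mul g g^-1; rewrite mulgV => /(groupM lift1); rewrite mulKVg.
by move/groupV; rewrite invMg.
Qed.

Lemma lift_conj y h k : K k -> congK (f (conjg y h * k)) (f h).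
Proof.
move=> Kk; apply: congK_trans (lift_congK (congK_sym (congK_mulK _ Kk))) _.
apply: congK_trans (lift_mul _ _) _.
apply: congK_trans (congK_mul (lift_mul y h) (lift_inv y)) _.
rewrite -{2}(mulgK (f h) (f y)); apply: congK_mul (congK_refl _).
exact: congK_commute (lift_in_A y) (lift_in_A h).
Qed.
End Lifting.

Section Bilinear.
Variable b : T -> T -> T.
Hypothesis Hb : bilin_B mul one K b.

Lemma bil_K g h : K (b g h). Proof. by case: Hb. Qed.
Lemma bilMl g h k : b (g * h) k = b g k * b h k. Proof. by case: Hb => _ [+ _]; apply. Qed.
Lemma bilMr g h k : b g (h * k) = b g h * b g k. Proof. by case: Hb => _ [_ [+ _]]; apply. Qed.
Lemma bilKl k g : K k -> b k g = one. Proof. by case: Hb => _ [_ [_ /[apply] /(_ g) []]]. Qed.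
Lemma bilKr k g : K k -> b g k = one. Proof. by case: Hb => _ [_ [_ /[apply] /(_ g) []]]. Qed.

Lemma bilVl g h : b g^-1 h = (b g h)^-1.
Proof. by apply: eq_invg_mul; rewrite -bilMl mulgV (bilKl _ group1). Qed.

Lemma bilVr g h : b g h^-1 = (b g h)^-1.
Proof. by apply: eq_invg_mul; rewrite -bilMr mulgV (bilKr _ group1). Qed.

Lemma bil_conjl y x k g : K k -> b (conjg y x * k) g = b x g.
Proof.
move=> Kk; rewrite /conjg !bilMl bilVl (bilKl _ Kk) mulg1.
by rewrite (commute_K _ (bil_K y g)) mulgK.
Qed.

Lemma bil_conjr y x k g : K k -> b g (conjg y x * k) = b g x.
Proof.
move=> Kk; rewrite /conjg !bilMr bilVr (bilKr _ Kk) mulg1.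
by rewrite (commute_K _ (bil_K g y)) mulgK.
Qed.
End Bilinear.

Definition lam (f : T -> T) (b : T -> T -> T) g h := conjg (f g) h * b g h.

Section Lam.
Variables (f : T -> T) (b : T -> T -> T).
Hypotheses (Hf : lifting_A mul inv K A f) (Hb : bilin_B mul one K b).

Lemma circ_lam g h : circ mul inv f b g h = g * lam f b g h.
Proof. by rewrite /circ /lam /conjg !mulgA. Qed.

Lemma lam_endo_action : is_endo_action (lam f b).
Proof.
split=> [g x y|]; last split=> [g h x|x].
- rewrite /lam conjMg (bilMr Hb) (mulgA (_ * conjg _ y)) (mulgA (_ * b g x)).
  by rewrite (mulg_swapK (conjg _ x) _ (bil_K Hb g x)).
- rewrite /lam (conjg_congK _ (lift_mul Hf g h)) conjgM (bilMl Hb) conjMg.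
  rewrite (conjg_K _ (bil_K Hb h x)) (bil_conjr Hb _ _ _ (bil_K Hb h x)) mulgA.
  by rewrite (mulg_swapK _ _ (bil_K Hb g x)).
- by rewrite /lam (conjgKl _ (lift1 Hf)) (bilKl Hb _ group1) mulg1.
Qed.

Lemma lam_conj_index y h k x : K k -> lam f b (conjg y h * k) x = lam f b h x.
Proof.
by move=> Kk; rewrite /lam (conjg_congK _ (lift_conj Hf _ _ Kk)) (bil_conjl Hb _ _ _ Kk).
Qed.

Lemma twist_inv_lam g : twist_inv (lam f b) g = (f g)^-1 * g^-1 * f g * b g g.
Proof.
rewrite /twist_inv /lam (conjg_congK _ (lift_inv Hf g)) (bilVl Hb) (bilVr Hb).
by rewrite invgK /conjg invgK.
Qed.
End Lam.

Lemma lam_compatible f b f2 b2 :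
  lifting_A mul inv K A f -> bilin_B mul one K b ->
  lifting_A mul inv K A f2 -> bilin_B mul one K b2 ->
  compatible (lam f b) (lam f2 b2).
Proof.
move=> Hf Hb Hf2 Hb2; split=> [a h x|a c x].
  exact: lam_conj_index (bil_K Hb2 a h).
rewrite /lam conjMg (conjg_K _ (bil_K Hb2 c x)) (bil_conjr Hb _ _ _ (bil_K Hb2 c x)).
rewrite conjMg (conjg_K _ (bil_K Hb a x)) (bil_conjr Hb2 _ _ _ (bil_K Hb a x)).
rewrite -!conjgM (conjg_congK _ (congK_commute (lift_in_A Hf a) (lift_in_A Hf2 c))).
by rewrite (mulg_swapK _ _ (bil_K Hb2 c x)).
Qed.

Section Circ.
Variables (f f2 : T -> T) (b b2 : T -> T -> T).
Hypotheses (Hf : lifting_A mul inv K A f) (Hb : bilin_B mul one K b).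
Hypotheses (Hf2 : lifting_A mul inv K A f2) (Hb2 : bilin_B mul one K b2).

Lemma circ_group : is_group (circ mul inv f b).
Proof.
exact: twist_group (lam_endo_action Hf Hb) (lam_compatible Hf Hb Hf Hb) (circ_lam f b).
Qed.

Lemma circ_unit : is_unit (circ mul inv f b) one.
Proof. exact: twist_unit (lam_endo_action Hf Hb) (circ_lam f b). Qed.

Lemma circ_inverse g (x := (f g)^-1 * g^-1 * f g * b g g) :
  circ mul inv f b g x = one /\ circ mul inv f b x g = one.
Proof.
rewrite /x -(twist_inv_lam Hf Hb); split.
- exact: twist_invr (lam_endo_action Hf Hb) (circ_lam f b) g.
- exact: twist_invl (lam_endo_action Hf Hb) (lam_compatible Hf Hb Hf Hb) (circ_lam f b) g.
Qed.

Lemma circ_skew_brace : skew_brace (circ mul inv f b) (circ mul inv f2 b2).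
Proof.
exact: twist_skew_brace (lam_endo_action Hf Hb) (lam_endo_action Hf2 Hb2)
  (lam_compatible Hf Hb Hf Hb) (lam_compatible Hf2 Hb2 Hf2 Hb2)
  (lam_compatible Hf Hb Hf2 Hb2) (circ_lam f b) (circ_lam f2 b2).
Qed.
End Circ.

End Central.
End Group.

Theorem mainTheorem1 (T : Type) (mul : T -> T -> T) (one : T) (inv : T -> T)
  (K A : T -> Prop)
  (HG : is_group_with mul one inv)
  (HK : is_subgroup mul one inv K) (HKc : central mul K)
  (HA : is_subgroup mul one inv A) (HKA : forall x, K x -> A x)
  (HAab : abelian_mod mul inv K A)
  (phi psi : T -> T) (beta alpha : T -> T -> T)
  (Hphi : lifting_A mul inv K A phi) (Hbeta : bilin_B mul one K beta)
  (Hpsi : lifting_A mul inv K A psi) (Halpha : bilin_B mul one K alpha) :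
  is_group (circ mul inv phi beta) /\
  is_unit (circ mul inv phi beta) one /\
  (forall g,
     let x := mul (mul (mul (inv (phi g)) (inv g)) (phi g)) (beta g g) in
     circ mul inv phi beta g x = one /\ circ mul inv phi beta x g = one) /\
  is_group (circ mul inv psi alpha) /\
  is_unit (circ mul inv psi alpha) one /\
  bi_skew_brace (circ mul inv phi beta) (circ mul inv psi alpha).
Proof.
split; first exact: circ_group Hphi Hbeta.
split; first exact: circ_unit Hphi Hbeta.
split; first exact: circ_inverse Hphi Hbeta.
split; first exact: circ_group Hpsi Halpha.
split; first exact: circ_unit Hpsi Halpha.
by split; [exact: circ_skew_brace Hphi Hbeta Hpsi Halpha
          | exact: circ_skew_brace Hpsi Halpha Hphi Hbeta].
Qed.
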